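(* For each $N$, let $(\Sigma_t)_{t\ge0}$ be a time-homogeneous Markov chain on a finite state space and $V$ a real function on that space. Suppose there are constants $V_{\max},\bar\eta,\gamma,C,C',K>0$ independent of $N$ such that for all $N$ and all $t\ge0$, almost surely: $0\le V(\Sigma_t)\le V_{\max}$; if $V(\Sigma_t)>\bar\eta$ then $\mathbb E[V(\Sigma_{t+1})-V(\Sigma_t)\mid\Sigma_t]\le-\gamma$ and $\mathbb E[(V(\Sigma_{t+1})-V(\Sigma_t))^+\mid\Sigma_t]\le K/\sqrt N$; if $\bar\eta/2<V(\Sigma_t)\le\bar\eta$ then $\mathbb E[(V(\Sigma_{t+1})-V(\Sigma_t))^+\mid\Sigma_t]\le Ke^{-CN}$; if $V(\Sigma_t)\le\bar\eta/2$ then $\mathbb P(V(\Sigma_{t+1})>\bar\eta/2\mid\Sigma_t)\le Ke^{-C'N}$. Then there are constants $C''>0$, $K''$ independent of $N$ such that for all sufficiently large $N$, $$\mathbb P(V(\Sigma_\infty)>\bar\eta)\le K''e^{-C''N}.$$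
   Context: For a function $f$ of the chain state, $\mathbb E[f(\Sigma_\infty)]$ denotes the long-run average $\lim_{T\to\infty}\frac1T\sum_{t=0}^{T-1}\mathbb E[f(\Sigma_t)]$ (which exists for a finite-state Markov chain, possibly depending on the initial state); in particular $\mathbb P(V(\Sigma_\infty)>\bar\eta)=\lim_{T\to\infty}\frac1T\sum_{t<T}\mathbb P(V(\Sigma_t)>\bar\eta)$. *)

From HB Require Import structures.
From mathcomp Require Import all_boot all_order all_algebra.
From mathcomp Require Import all_classical all_reals all_analysis.
Set Implicit Arguments. Unset Strict Implicit. Unset Printing Implicit Defensive.
Import Order.TTheory GRing.Theory Num.Theory.
Import numFieldNormedType.Exports.
Local Open Scope classical_set_scope.
Local Open Scope ring_scope.

(* A time-homogeneous Markov chain on a finite state space T is given by an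
   initial distribution mu and a transition matrix P (P s s' = P(Σ_{t+1}=s' | Σ_t=s)). *)
Definition stochastic {R : realType} {T : finType} (P : T -> T -> R) : Prop :=
  (forall s s', 0 <= P s s') /\ (forall s, \sum_(s' : T) P s s' = 1).

Definition is_distribution {R : realType} {T : finType} (mu : T -> R) : Prop :=
  (forall s, 0 <= mu s) /\ \sum_(s : T) mu s = 1.

Fixpoint dist {R : realType} {T : finType} (P : T -> T -> R) (mu : T -> R) (t : nat)
  : T -> R :=
  match t with
  | 0 => mu
  | t'.+1 => fun s' => \sum_(s : T) dist P mu t' s * P s s'
  end.

Definition reachable {R : realType} {T : finType} (P : T -> T -> R) (mu : T -> R) (s : T)
  : Prop := exists t, 0 < dist P mu t s.

Definition cond_exp {R : realType} {T : finType} (P : T -> T -> R) (s : T) (f : T -> R) : R :=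
  \sum_(s' : T) P s s' * f s'.

Definition cond_prob {R : realType} {T : finType} (P : T -> T -> R) (s : T) (A : pred T) : R :=
  \sum_(s' : T | A s') P s s'.

Definition pospart {R : realType} (x : R) : R := Num.max x 0.

Definition cesaro_prob {R : realType} {T : finType} (P : T -> T -> R) (mu : T -> R)
  (A : pred T) (n : nat) : R :=
  (n%:R)^-1 * \sum_(t < n) \sum_(s : T | A s) dist P mu t s.

(* P(Σ_∞ ∈ A) := lim_{T→∞} (1/T) Σ_{t<T} P(Σ_t ∈ A) *)
Definition long_run_prob {R : realType} {T : finType} (P : T -> T -> R) (mu : T -> R)
  (A : pred T) : R :=
  limn (cesaro_prob P mu A : nat -> R).

(* The excess W := (V - eta/2)^+ is a Lyapunov function.  Above eta its
   expected one-step change is at most -gamma/4 once the positive jumps are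
   smaller than gamma/2 (true for N large); between eta/2 and eta it grows by
   at most K e^{-CN} in expectation; below eta/2 it can only jump, up to Vmax,
   with probability at most K e^{-C'N}.  Summing the drift over t < n and using
   0 <= W <= Vmax, the fraction of time spent above eta is at most
   (4/gamma) (K e^{-CN} + Vmax K e^{-C'N}) + O(1/n). *)

From HB Require Import structures.
From mathcomp Require Import all_boot all_order all_algebra.
From mathcomp Require Import all_classical all_reals all_analysis.
From mathcomp Require Import ring lra.
Import Order.TTheory GRing.Theory Num.Theory.
Import numFieldNormedType.Exports.
Set Implicit Arguments. Unset Strict Implicit.
Local Open Scope ring_scope.

Variant pospart_spec {R : realType} (x : R) : R -> Prop :=
  | PospartPos of 0 <= x : pospart_spec x x
  | PospartNeg of x <= 0 : pospart_spec x 0.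

Lemma pospartP {R : realType} (x : R) : pospart_spec x (pospart x).
Proof.
rewrite /pospart /Order.max; case: ifPn => [/ltW|]; first exact: PospartNeg.
by rewrite -leNgt; exact: PospartPos.
Qed.

Lemma pospart_ge0 {R : realType} (x : R) : 0 <= pospart x.
Proof. by case: pospartP. Qed.

Lemma ler_wsum {R : realType} {T : finType} (w f g : T -> R) :
  (forall i, 0 <= w i) -> (forall i, 0 < w i -> f i <= g i) ->
  \sum_i w i * f i <= \sum_i w i * g i.
Proof.
move=> w_ge0 fg; apply: ler_sum => i _.
have [->|wi_gt0] := eqVneq (w i) 0; first by rewrite !mul0r.
by rewrite ler_pM2l ?fg // lt0r wi_gt0 w_ge0.
Qed.

(* When u diverges, [limn u] is the junk value 0, hence the hypothesis 0 <= B. *)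
Lemma limn_le_addVn {R : realType} (u : nat -> R) (B D : R) :
  0 <= B -> 0 <= D -> (forall n, (0 < n)%N -> u n <= B + D / n%:R) -> limn u <= B.
Proof.
move=> B_ge0 D_ge0 u_le.
have [u_cvg|u_dvg] := pselect (cvgn u); last by rewrite (dvgP u_dvg).
apply/ler_addgt0Pr => e e_gt0; apply: limr_le => //.
exists (Num.truncn (D / e)).+1 => // n /= n_large.
have n_gt0 : 0 < n%:R :> R by rewrite ltr0n (leq_ltn_trans (leq0n _) n_large).
have De_lt : D / e < n%:R by rewrite -truncn_lt_nat ?divr_ge0 ?(ltW e_gt0).
apply: le_trans (u_le n (leq_ltn_trans (leq0n _) n_large)) _.
rewrite lerD2l ler_pdivrMr //.
by move: De_lt; rewrite ltr_pdivrMr // mulrC => /ltW.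
Qed.

Lemma divr_sqrtn_le {R : realType} (K e : R) : 0 < e ->
  exists N0 : nat, forall N : nat, (N0 <= N)%N -> K / Num.sqrt N%:R <= e.
Proof.
move=> e_gt0; exists (Num.truncn ((K / e) ^+ 2)).+1 => N N_large.
have N_gt0 : 0 < N%:R :> R by rewrite ltr0n (leq_ltn_trans (leq0n _) N_large).
have Ke_lt : (K / e) ^+ 2 < N%:R by rewrite -truncn_lt_nat ?sqr_ge0.
have Ke_lt_sqrt : K / e < Num.sqrt N%:R.
  by apply: le_lt_trans (ler_norm _) _; rewrite -sqrtr_sqr ltr_sqrt.
rewrite ler_pdivrMr ?sqrtr_gt0 // mulrC -ler_pdivrMr //; exact: ltW.
Qed.

Section Chain.
Variables (R : realType) (T : finType) (P : T -> T -> R) (mu : T -> R).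
Hypotheses (P_stoch : stochastic P) (mu_dist : is_distribution mu).

Lemma dist_ge0 t s : 0 <= dist P mu t s.
Proof.
case: P_stoch mu_dist => P_ge0 _ [mu_ge0 _]; elim: t s => [|t IH] s //=.
by apply: sumr_ge0 => s' _; apply: mulr_ge0.
Qed.

Lemma sum_dist t : \sum_s dist P mu t s = 1.
Proof.
case: P_stoch mu_dist => _ P_sum1 [_ mu_sum1]; elim: t => [|t IH] //=.
rewrite exchange_big /= -[RHS]IH; apply: eq_bigr => s _.
by rewrite -mulr_sumr P_sum1 mulr1.
Qed.

Lemma reachable_succ s s' :
  reachable P mu s -> 0 < P s s' -> reachable P mu s'.
Proof.
move=> [t dist_gt0] P_gt0; exists t.+1 => /=.
rewrite (bigD1 s) //=; apply: ltr_wpDr; last exact: mulr_gt0.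
by apply: sumr_ge0 => i _; apply: mulr_ge0; [exact: dist_ge0 | case: P_stoch].
Qed.

Lemma ler_sum_dist t (f g : T -> R) :
  (forall s, reachable P mu s -> f s <= g s) ->
  \sum_s dist P mu t s * f s <= \sum_s dist P mu t s * g s.
Proof.
by move=> fg; apply: ler_wsum => [s|s dist_gt0]; [exact: dist_ge0 | apply: fg; exists t].
Qed.

Lemma sum_dist_succ t (f : T -> R) :
  \sum_s dist P mu t.+1 s * f s = \sum_s dist P mu t s * cond_exp P s f.
Proof.
under eq_bigr do rewrite /= mulr_suml.
rewrite exchange_big /=; apply: eq_bigr => s _; rewrite /cond_exp mulr_sumr.
by apply: eq_bigr => s' _; rewrite mulrA.
Qed.

Lemma sum_dist_indicator t (A : pred T) :
  \sum_s dist P mu t s * (A s)%:R = \sum_(s | A s) dist P mu t s.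
Proof. by rewrite [RHS]big_mkcond; apply: eq_bigr => s _; rewrite mulr_natr mulrb. Qed.

Lemma ler_cond_exp s (f g : T -> R) :
  (forall s', 0 < P s s' -> f s' <= g s') -> cond_exp P s f <= cond_exp P s g.
Proof. by apply: ler_wsum => s'; case: P_stoch. Qed.

Lemma cond_expD s (f g : T -> R) :
  cond_exp P s (fun s' => f s' + g s') = cond_exp P s f + cond_exp P s g.
Proof. by rewrite /cond_exp -big_split; apply: eq_bigr => s' _; rewrite mulrDr. Qed.

Lemma cond_expZ s a (f : T -> R) :
  cond_exp P s (fun s' => a * f s') = a * cond_exp P s f.
Proof. by rewrite /cond_exp mulr_sumr; apply: eq_bigr => s' _; rewrite mulrCA. Qed.

Lemma cond_exp_subr s (f : T -> R) x :
  cond_exp P s (fun s' => f s' - x) = cond_exp P s f - x.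
Proof.
case: P_stoch => _ P_sum1; rewrite /cond_exp.
by under eq_bigr do rewrite mulrBr; rewrite sumrB -mulr_suml P_sum1 mul1r.
Qed.

Lemma cond_exp_indicator s (A : pred T) :
  cond_exp P s (fun s' => (A s')%:R) = cond_prob P s A.
Proof.
rewrite /cond_exp /cond_prob [RHS]big_mkcond; apply: eq_bigr => s' _.
by case: (A s'); rewrite ?mulr1 ?mulr0.
Qed.

End Chain.

Section Lyapunov.
Variables (R : realType) (T : finType) (P : T -> T -> R) (mu : T -> R).
Hypotheses (P_stoch : stochastic P) (mu_dist : is_distribution mu).
Variables (V : T -> R) (Vmax eta gamma a b c : R).
Hypotheses (Vmax_ge0 : 0 <= Vmax) (eta_gt0 : 0 < eta) (gamma_gt0 : 0 < gamma).
Hypotheses (a_le : a <= gamma / 2) (b_ge0 : 0 <= b) (c_ge0 : 0 <= c).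
Hypothesis V_bounds : forall s, reachable P mu s -> 0 <= V s <= Vmax.
Hypothesis drift_above : forall s, reachable P mu s -> eta < V s ->
  cond_exp P s (fun s' => V s' - V s) <= - gamma.
Hypothesis jump_above : forall s, reachable P mu s -> eta < V s ->
  cond_exp P s (fun s' => pospart (V s' - V s)) <= a.
Hypothesis jump_between : forall s, reachable P mu s -> eta / 2 < V s <= eta ->
  cond_exp P s (fun s' => pospart (V s' - V s)) <= b.
Hypothesis escape_below : forall s, reachable P mu s -> V s <= eta / 2 ->
  cond_prob P s (fun s' => eta / 2 < V s') <= c.

Definition excess s := pospart (V s - eta / 2).

Lemma excess_le s : reachable P mu s -> excess s <= Vmax.
Proof.
move=> /V_bounds /andP[V_ge0 V_le]; have := eta_gt0.
by rewrite /excess; case: pospartP => ?; lra.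
Qed.

Lemma excess_drift_above s : reachable P mu s -> eta < V s ->
  cond_exp P s excess - excess s <= - (gamma / 4).
Proof.
move=> s_reach V_gt; rewrite -cond_exp_subr //.
(* As V s >= eta and V s' >= 0, the excess changes by at most the average of
   V s' - V s and its positive part. *)
apply: le_trans (_ : cond_exp P s
  (fun s' => 1 / 2 * (V s' - V s) + 1 / 2 * pospart (V s' - V s)) <= _).
  apply: ler_cond_exp => // s' P_gt0.
  have /andP[V'_ge0 _] := V_bounds (reachable_succ P_stoch mu_dist s_reach P_gt0).
  have := eta_gt0; rewrite /excess.
  by case: pospartP => ?; case: pospartP => ?; case: pospartP => ?; lra.
rewrite cond_expD !cond_expZ; have := a_le.
by have := drift_above s_reach V_gt; have := jump_above s_reach V_gt; lra.
Qed.

Lemma excess_drift_between s : reachable P mu s -> eta / 2 < V s <= eta ->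
  cond_exp P s excess - excess s <= b.
Proof.
move=> s_reach V_between; rewrite -cond_exp_subr //.
apply: le_trans (jump_between s_reach V_between).
apply: ler_cond_exp => // s' _; move: V_between => /andP[V_gt _].
rewrite /excess; case: pospartP => ?; case: pospartP => ?; case: pospartP => ?; lra.
Qed.

Lemma excess_drift_below s : reachable P mu s -> V s <= eta / 2 ->
  cond_exp P s excess - excess s <= Vmax * c.
Proof.
move=> s_reach V_le; have -> : excess s = 0 by rewrite /excess; case: pospartP => ?; lra.
rewrite subr0; apply: le_trans (_ : cond_exp P s
  (fun s' => Vmax * (eta / 2 < V s')%R%:R) <= _).
  apply: ler_cond_exp => // s' P_gt0.
  have := excess_le (reachable_succ P_stoch mu_dist s_reach P_gt0).
  rewrite /excess; case: (ltrP (eta / 2) (V s')) => ?; rewrite ?mulr1 ?mulr0;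
  by case: pospartP => ?; lra.
by rewrite cond_expZ cond_exp_indicator ler_wpM2l ?escape_below.
Qed.

Lemma excess_drift s : reachable P mu s ->
  cond_exp P s excess - excess s <= - (gamma / 4) * (eta < V s)%R%:R + (b + Vmax * c).
Proof.
move=> s_reach; have Vmax_c_ge0 : 0 <= Vmax * c by rewrite mulr_ge0.
have := b_ge0; have [V_gt|V_le_eta] /= := ltrP eta (V s).
  by have := excess_drift_above s_reach V_gt; lra.
have [V_gt_half|V_le_half] := ltrP (eta / 2) (V s).
  by have := excess_drift_between s_reach (introT andP (conj V_gt_half V_le_eta)); lra.
by have := excess_drift_below s_reach V_le_half; lra.
Qed.

Definition mean_excess t := \sum_s dist P mu t s * excess s.

Definition prob_above t := \sum_(s | eta < V s) dist P mu t s.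

Lemma mean_excess_ge0 t : 0 <= mean_excess t.
Proof. by apply: sumr_ge0 => s _; rewrite mulr_ge0 ?pospart_ge0 ?dist_ge0. Qed.

Lemma mean_excess_le t : mean_excess t <= Vmax.
Proof.
apply: le_trans (ler_sum_dist P_stoch mu_dist _ excess_le) _.
by rewrite -mulr_suml sum_dist // mul1r.
Qed.

Lemma mean_excess_succ_le t :
  mean_excess t.+1 - mean_excess t <= - (gamma / 4) * prob_above t + (b + Vmax * c).
Proof.
rewrite /mean_excess sum_dist_succ -sumrB.
under eq_bigr do rewrite -mulrBr.
apply: le_trans (ler_sum_dist P_stoch mu_dist _ excess_drift) _.
under eq_bigr do rewrite mulrDr mulrCA.
by rewrite big_split /= -mulr_sumr -mulr_suml sum_dist // mul1r sum_dist_indicator.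
Qed.

Lemma sum_prob_above_le n :
  gamma / 4 * \sum_(t < n) prob_above t + mean_excess n <=
    mean_excess 0 + n%:R * (b + Vmax * c).
Proof.
elim: n => [|n IH]; first by rewrite big_ord0 mulr0 add0r mul0r addr0.
rewrite big_ord_recr /= mulrDr -[n.+1%:R]natr1 mulrDl mul1r.
by have := mean_excess_succ_le n; lra.
Qed.

Lemma cesaro_prob_above_le n : (0 < n)%N ->
  cesaro_prob P mu (fun s => eta < V s) n <=
    4 / gamma * (b + Vmax * c) + 4 / gamma * Vmax / n%:R.
Proof.
move=> n_gt0; have n_neq0 : n%:R != 0 :> R by rewrite pnatr_eq0 -lt0n.
have gamma_neq0 : gamma != 0 by rewrite gt_eqF.
have := sum_prob_above_le n; have := mean_excess_ge0 n; have := mean_excess_le 0.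
set S := \sum_(t < n) prob_above t => m0_le mn_ge0 telescope.
have S_le : gamma / 4 * S <= Vmax + n%:R * (b + Vmax * c) by lra.
have -> : 4 / gamma * (b + Vmax * c) + 4 / gamma * Vmax / n%:R =
          n%:R^-1 * (4 / gamma * (Vmax + n%:R * (b + Vmax * c))) by field; rewrite gamma_neq0.
rewrite /cesaro_prob -/S ler_wpM2l ?invr_ge0 ?ler0n //.
have -> : S = 4 / gamma * (gamma / 4 * S) by field.
by rewrite ler_wpM2l ?divr_ge0 ?(ltW gamma_gt0).
Qed.

Lemma long_run_prob_above_le :
  long_run_prob P mu (fun s => eta < V s) <= 4 / gamma * (b + Vmax * c).
Proof.
apply: limn_le_addVn cesaro_prob_above_le.
  by rewrite mulr_ge0 ?divr_ge0 ?addr_ge0 ?mulr_ge0 ?(ltW gamma_gt0).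
by rewrite mulr_ge0 ?divr_ge0 ?(ltW gamma_gt0).
Qed.

End Lyapunov.

Theorem lemma8 (R : realType) (S : nat -> finType)
  (P : forall N : nat, S N -> S N -> R) (mu : forall N : nat, S N -> R)
  (V : forall N : nat, S N -> R) (Vmax eta gamma C C' K : R) :
  0 < Vmax -> 0 < eta -> 0 < gamma -> 0 < C -> 0 < C' -> 0 < K ->
  (forall N : nat, (0 < N)%N -> stochastic (P N) /\ is_distribution (mu N)) ->
  (forall (N : nat) (s : S N), (0 < N)%N -> reachable (P N) (mu N) s ->
     [/\ 0 <= V N s <= Vmax,
         eta < V N s ->
           cond_exp (P N) s (fun s' => V N s' - V N s) <= - gamma /\
           cond_exp (P N) s (fun s' => pospart (V N s' - V N s)) <= K / Num.sqrt (N%:R),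
         eta / 2 < V N s <= eta ->
           cond_exp (P N) s (fun s' => pospart (V N s' - V N s)) <= K * expR (- (C * N%:R))
       & V N s <= eta / 2 ->
           cond_prob (P N) s (fun s' => eta / 2 < V N s') <= K * expR (- (C' * N%:R))]) ->
  exists C'' K'' : R, 0 < C'' /\
    exists N0 : nat, forall N : nat, (N0 <= N)%N ->
      long_run_prob (P N) (mu N) (fun s => eta < V N s) <= K'' * expR (- (C'' * N%:R)).
Proof.
move=> Vmax_gt0 eta_gt0 gamma_gt0 C_gt0 C'_gt0 K_gt0 chain hyps.
exists (Num.min C C'), (4 / gamma * (K * (1 + Vmax))); split; first by rewrite lt_min C_gt0.
have [N0 jump_small] := divr_sqrtn_le K (divr_gt0 gamma_gt0 (ltr0n _ 2)).
exists N0.+1 => N N_large; have N_gt0 : (0 < N)%N by apply: leq_ltn_trans N_large.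
have [P_stoch mu_dist] := chain N N_gt0.
set e := expR (- (Num.min C C' * N%:R)).
have exp_le C0 : Num.min C C' <= C0 -> K * expR (- (C0 * N%:R)) <= K * e.
  by move=> C0_ge; rewrite ler_pM2l // ler_expR lerN2 ler_wpM2r ?ler0n.
apply: le_trans (long_run_prob_above_le (b := K * expR (- (C * N%:R)))
  (c := K * expR (- (C' * N%:R))) P_stoch mu_dist (ltW Vmax_gt0) eta_gt0 gamma_gt0
  (jump_small N (ltnW N_large)) (ltW (mulr_gt0 K_gt0 (expR_gt0 _)))
  (ltW (mulr_gt0 K_gt0 (expR_gt0 _))) _ _ _ _ _) _.
- by move=> s /(hyps N s N_gt0) [].
- by move=> s /(hyps N s N_gt0) [_ + _ _] => /[apply] -[].
- by move=> s /(hyps N s N_gt0) [_ + _ _] => /[apply] -[].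
- by move=> s /(hyps N s N_gt0) [].
- by move=> s /(hyps N s N_gt0) [].
have le_C : K * expR (- (C * N%:R)) <= K * e by apply: exp_le; rewrite ge_min lexx.
have le_C' : K * expR (- (C' * N%:R)) <= K * e by apply: exp_le; rewrite ge_min lexx orbT.
rewrite -!mulrA 2?ler_pM2l ?invr_gt0 ?ltr0n // mulrDl mul1r.
rewrite mulrDr [K * (Vmax * e)]mulrCA lerD //.
by apply: ler_wpM2l le_C'; exact: ltW.
Qed.
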